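(* Let $X,Y$ be nominal $\mathrm{Sb}$-sets with $\dim(X)\le 1$. Then the nominal $\mathrm{Perm}$-set $U(X)\mathbin{-\!\!*}U(Y)$ is isomorphic to $U(X\Rightarrow_{\mathrm{Sb}}Y)$, naturally in $X$ and $Y$.
   Context: Atoms $\mathbb{A}$ (countably infinite); $\mathrm{Sb}$ = monoid of functions $\mathbb{A}\to\mathbb{A}$ that differ from the identity on finitely many atoms; $\mathrm{Perm}\subseteq\mathrm{Sb}$ the bijections. For $M\in\{\mathrm{Sb},\mathrm{Perm}\}$, a nominal $M$-set is a set with an $M$-action in which every element $x$ has a finite support (a set $C\subseteq\mathbb{A}$ with $m_1|_C=m_2|_C\Rightarrow m_1x=m_2x$ for $m_i\in M$); each $x$ has a least finite support $\mathrm{supp}(x)$, and $\dim(X)=\max_{x\in X}|\mathrm{supp}(x)|$. $U$ forgets from $\mathrm{Sb}$-actions to $\mathrm{Perm}$-actions. $x\perp y$ means disjoint supports. $A\mathbin{-\!\!*}B$ (magic wand) is the nominal $\mathrm{Perm}$-set of partial functions $f\colon A\rightharpoonup B$ that are finitely supported for the action $(g\cdot f)(a)=g\cdot f(g^{-1}a)$, defined exactly on $\{a\mid f\perp a\}$, and satisfy $\mathrm{supp}(f)=\bigcup_{a\in\mathrm{dom}f}\mathrm{supp}(f(a))\setminus\mathrm{supp}(a)$; it is right adjoint to the separated product $-\otimes A$, where $A\otimes B=\{(a,b)\mid a\perp b\}$. $A\Rightarrow_{\mathrm{Sb}}B$ is the exponential object of the category of nominal $\mathrm{Sb}$-sets: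 the finitely supported $\mathrm{Sb}$-equivariant maps $f\colon\mathrm{Sb}\times A\to B$, with action $(m\cdot f)(n,a)=f(nm,a)$. *)

From mathcomp Require Import all_boot.
From Stdlib Require Import ClassicalEpsilon.

Set Implicit Arguments.
Unset Strict Implicit.
Unset Printing Implicit Defensive.

Definition atom := nat.

Definition finitary (m : atom -> atom) : Prop :=
  exists s : seq atom, forall a, a \notin s -> m a = a.

Definition Sb : Type := {m : atom -> atom | finitary m}.
Definition sbf (m : Sb) : atom -> atom := proj1_sig m.

Lemma finitary_comp (m n : atom -> atom) :
  finitary m -> finitary n -> finitary (m \o n).
Proof.
move=> [s Hs] [t Ht]; exists (s ++ t) => a.
rewrite mem_cat negb_or => /andP[Ha1 Ha2] /=.
by rewrite Ht // Hs.
Qed.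

(* Monoid product: (m n) = m \o n, so that (m n) . x = m . (n . x). *)
Definition sb_comp (m n : Sb) : Sb :=
  exist _ (sbf m \o sbf n) (finitary_comp (proj2_sig m) (proj2_sig n)).

Definition Perm : Type := {m : Sb | bijective (sbf m)}.
Definition perm_sb (p : Perm) : Sb := proj1_sig p.
Definition permf (p : Perm) : atom -> atom := sbf (perm_sb p).

Lemma bij_ex (f : atom -> atom) :
  bijective f -> exists g, cancel f g /\ cancel g f.
Proof. by case=> g H1 H2; exists g. Qed.

Definition perm_invf (p : Perm) : atom -> atom :=
  proj1_sig (constructive_indefinite_description _ (bij_ex (proj2_sig p))).

Lemma perm_invfK (p : Perm) :
  cancel (permf p) (perm_invf p) /\ cancel (perm_invf p) (permf p).
Proof. exact: (proj2_sig (constructive_indefinite_description _ (bij_ex (proj2_sig p)))). Qed.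

Lemma perm_invf_finitary (p : Perm) : finitary (perm_invf p).
Proof.
have [s Hs] := proj2_sig (perm_sb p).
exists s => a Ha; have [K1 _] := perm_invfK p.
by rewrite -{1}(Hs a Ha) K1.
Qed.

Definition perm_inv_sb (p : Perm) : Sb := exist _ (perm_invf p) (perm_invf_finitary p).

Lemma perm_inv_bij (p : Perm) : bijective (sbf (perm_inv_sb p)).
Proof. by have [K1 K2] := perm_invfK p; exists (permf p). Qed.

Definition perm_inv (p : Perm) : Perm := exist _ (perm_inv_sb p) (perm_inv_bij p).

(* A set with an action of M; [mf] interprets elements of M as functions
   on atoms (mf = sbf for Sb, mf = permf for Perm). *)
Record mset (M : Type) := MSet { mcar :> Type; mact : M -> mcar -> mcar }.
Arguments MSet {M}.
Arguments mact {M m}.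

Definition is_maction {M} (mf : M -> atom -> atom) (X : mset M) : Prop :=
  (forall (i : M) (x : X), mf i =1 id -> mact i x = x) /\
  (forall (m m1 m2 : M) (x : X), mf m =1 mf m1 \o mf m2 ->
       mact m x = mact m1 (mact m2 x)).

Definition is_support {M} (mf : M -> atom -> atom) (X : mset M)
    (C : seq atom) (x : X) : Prop :=
  forall m1 m2 : M, {in C, mf m1 =1 mf m2} -> mact m1 x = mact m2 x.
Arguments is_support {M} mf X C x.

Definition is_least_support {M} (mf : M -> atom -> atom) (X : mset M)
    (C : seq atom) (x : X) : Prop :=
  is_support mf X C x /\
  forall D : seq atom, is_support mf X D x -> {subset C <= D}.
Arguments is_least_support {M} mf X C x.

Definition is_nominal {M} (mf : M -> atom -> atom) (X : mset M) : Prop :=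
  is_maction mf X /\ forall x : X, exists C, is_support mf X C x.

Definition dim_le {M} (mf : M -> atom -> atom) (X : mset M) (n : nat) : Prop :=
  forall (x : X) (C : seq atom), is_least_support mf X C x -> size (undup C) <= n.

Definition perp {M} (mf : M -> atom -> atom) (X Y : mset M) (x : X) (y : Y) : Prop :=
  exists Cx Cy, [/\ is_least_support mf X Cx x, is_least_support mf Y Cy y
                  & forall a, a \in Cx -> a \notin Cy].
Arguments perp {M} mf X Y x y.

Definition equivariant {M} (X Y : mset M) (h : X -> Y) : Prop :=
  forall (m : M) (x : X), h (mact m x) = mact m (h x).

(* Restriction of an action on T to the subset {t | P t}; it is the
   intended action whenever P is closed under it (which holds for the
   objects below); the else-branch is never used in that case. *)
Definition restrict_act {T} (P : T -> Prop) (act : T -> T) (x : {t | P t})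
  : {t | P t} :=
  match excluded_middle_informative (P (act (proj1_sig x))) with
  | left H => exist P _ H
  | right _ => x
  end.
Arguments restrict_act {T} P act x.

Definition U (X : mset Sb) : mset Perm :=
  MSet (mcar X) (fun p x => mact (perm_sb p) x).

Definition pfun_mset (A B : mset Perm) : mset Perm :=
  MSet (A -> option B)
       (fun g f a => omap (mact g) (f (mact (perm_inv g) a))).

Definition wand_pred (A B : mset Perm) (f : A -> option B) : Prop :=
  [/\ exists C, is_support permf (pfun_mset A B) C f,
      forall a : A, f a <> None <-> perp permf (pfun_mset A B) A f a
    & forall C, is_least_support permf (pfun_mset A B) C f ->
        forall b, b \in C <->
          exists (a : A) (y : B) Ca Cy,
            [/\ f a = Some y, is_least_support permf A Ca a,
                is_least_support permf B Cy y, b \in Cy & b \notin Ca]].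

Definition wand (A B : mset Perm) : mset Perm :=
  MSet {f : A -> option B | wand_pred f}
       (fun g => restrict_act (@wand_pred A B) (@mact _ (pfun_mset A B) g)).

Definition expamb (X Y : mset Sb) : mset Sb :=
  MSet (Sb -> X -> Y) (fun m F n a => F (sb_comp n m) a).

(* Sb-equivariant (Sb acting on itself by left multiplication) and
   finitely supported *)
Definition exp_pred (X Y : mset Sb) (F : Sb -> X -> Y) : Prop :=
  (forall (m n : Sb) (a : X), F (sb_comp m n) (mact m a) = mact m (F n a)) /\
  exists C, is_support sbf (expamb X Y) C F.

Definition expSb (X Y : mset Sb) : mset Sb :=
  MSet {F : Sb -> X -> Y | exp_pred F}
       (fun m => restrict_act (@exp_pred X Y) (@mact _ (expamb X Y) m)).

(** * Functorial action of -* on morphisms, as a relation: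
    g = (U h -* U k)(f) is characterised by g(a') = k(f(h a')) for all
    a' with f # a'. *)
Definition wand_map_rel (X X' Y Y' : mset Sb) (h : X' -> X) (k : Y -> Y')
    (f : wand (U X) (U Y)) (g : wand (U X') (U Y')) : Prop :=
  forall a' : X', perp permf (wand (U X) (U Y)) (U X') f a' ->
    proj1_sig g a' = omap k (proj1_sig f (h a')).

(* A nominal Sb-set of dimension at most 1 has every element x supported by a
   single atom a (or by no atom at all).  Given f in U(X) -* U(Y) with least
   support C, its exponential transpose sends (n, x) to n[d := a] . f((a d) . x)
   for any atom d outside C: the transposition (a d) moves x apart from C, so
   that f is defined there, and since the values of f at (a d) . x are
   supported by C together with d, the result does not depend on d.
   Conversely, F in X =>_Sb Y gives the partial map x |-> F(id, x), defined
   exactly on the x apart from supp(F).  Everything rests on least supports: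
   in an Sb-set a support can always be shrunk by substituting a fresh atom,
   so least supports exist, and in a nominal Sb-set they coincide with the
   least Perm-supports. *)

From mathcomp Require Import all_boot.
From Stdlib Require Import ClassicalEpsilon FunctionalExtensionality ProofIrrelevance Classical.

Set Implicit Arguments.
Unset Strict Implicit.
Unset Printing Implicit Defensive.

Lemma sig_ext T (P : T -> Prop) (u v : {t | P t}) : proj1_sig u = proj1_sig v -> u = v.
Proof. by case: u v => [u pu] [v pv] /= E; subst v; rewrite (proof_irrelevance _ pu pv). Qed.

Lemma sb_ext (m1 m2 : Sb) : sbf m1 =1 sbf m2 -> m1 = m2.
Proof. by move=> /functional_extensionality; apply: sig_ext. Qed.

Definition idSb : Sb := exist _ id (ex_intro _ [::] (fun _ _ => erefl)).
Definition idPerm : Perm := exist _ idSb (Bijective (g := id) (frefl _) (frefl _)).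

Lemma sb_compE (m1 m2 : Sb) : sbf (sb_comp m1 m2) =1 sbf m1 \o sbf m2.
Proof. by []. Qed.

Lemma sb_comp1 (m : Sb) : sb_comp m idSb = m. Proof. exact: sb_ext. Qed.
Lemma sb_1comp (m : Sb) : sb_comp idSb m = m. Proof. exact: sb_ext. Qed.

Definition updf (f : atom -> atom) (d a : atom) (z : atom) : atom :=
  if z == d then a else f z.

Lemma updf_eq f d a : updf f d a d = a. Proof. by rewrite /updf eqxx. Qed.
Lemma updf_neq f d a z : z != d -> updf f d a z = f z.
Proof. by rewrite /updf => /negbTE ->. Qed.

Lemma finitary_updf (m : Sb) d a : finitary (updf (sbf m) d a).
Proof.
have [s Hs] := proj2_sig m; exists (d :: s) => z.
by rewrite inE negb_or => /andP[zd zs]; rewrite updf_neq //; apply: Hs.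
Qed.

Definition upd (n : Sb) d a : Sb := exist _ (updf (sbf n) d a) (finitary_updf n d a).

Definition swapf (a b z : atom) : atom :=
  if z == a then b else if z == b then a else z.

Lemma swapfK a b : involutive (swapf a b).
Proof.
move=> z; rewrite /swapf.
have [->|za] := eqVneq z a; first by rewrite eqxx; case: eqP.
have [->|zb] := eqVneq z b; first by rewrite eqxx.
by rewrite (negbTE za) (negbTE zb).
Qed.

Lemma swapf_l a b : swapf a b a = b. Proof. by rewrite /swapf eqxx. Qed.
Lemma swapf_r a b : swapf a b b = a. Proof. by rewrite /swapf eqxx; case: eqP. Qed.
Lemma swapf_out a b z : z != a -> z != b -> swapf a b z = z.
Proof. by rewrite /swapf => /negbTE -> /negbTE ->. Qed.
Lemma swapf_aa a : swapf a a =1 id.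
Proof. by move=> z; rewrite /swapf; case: eqP => // ->. Qed.

Lemma swapf_notin (D : seq atom) a b z : a \notin D -> b \notin D -> z \in D ->
  swapf a b z = z.
Proof. by move=> aD bD zD; apply: swapf_out; apply: contraTneq zD => ->. Qed.

Lemma swap_fix (D : seq atom) d d' :
  d \notin D -> d' \notin D -> {in D, swapf d d' =1 id}.
Proof. by move=> dD d'D z; apply: swapf_notin. Qed.

Lemma finitary_swapf a b : finitary (swapf a b).
Proof.
exists [:: a; b] => z; rewrite !inE negb_or => /andP[za zb].
exact: swapf_out.
Qed.

Definition swapSb a b : Sb := exist _ (swapf a b) (finitary_swapf a b).
Definition swapPerm a b : Perm :=
  exist _ (swapSb a b) (Bijective (swapfK a b) (swapfK a b)).

Definition perm_comp (p q : Perm) : Perm :=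
  exist _ (sb_comp (perm_sb p) (perm_sb q))
        (bij_comp (proj2_sig p) (proj2_sig q)).

Lemma perm_compE (p q : Perm) : permf (perm_comp p q) =1 permf p \o permf q.
Proof. by []. Qed.

Lemma permK (p : Perm) : cancel (permf p) (permf (perm_inv p)).
Proof. exact: (perm_invfK p).1. Qed.
Lemma permKV (p : Perm) : cancel (permf (perm_inv p)) (permf p).
Proof. exact: (perm_invfK p).2. Qed.
Lemma perm_inj (p : Perm) : injective (permf p).
Proof. exact: can_inj (permK p). Qed.

Lemma mem_map_perm (p : Perm) (s : seq atom) z :
  (z \in map (permf p) s) = (permf (perm_inv p) z \in s).
Proof. by rewrite -{1}(permKV p z) (mem_map (@perm_inj p)). Qed.

Lemma mem_map_perm_inv (p : Perm) (s : seq atom) z :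
  (z \in map (permf (perm_inv p)) s) = (permf p z \in s).
Proof. by rewrite -{1}(permK p z) (mem_map (@perm_inj (perm_inv p))). Qed.

Definition fresh (s : seq atom) : atom := (\max_(z <- s) z).+1.

Lemma fresh_notin s : fresh s \notin s.
Proof. by apply/negP => /(@leq_bigmax_seq _ s xpredT id) /(_ isT); rewrite ltnn. Qed.

Section Actions.
Variables (M : Type) (mf : M -> atom -> atom) (comp : M -> M -> M).
Hypothesis mf_comp : forall m1 m2, mf (comp m1 m2) =1 mf m1 \o mf m2.
Variable X : mset M.
Hypothesis HX : is_maction mf X.

Lemma act_id (i : M) (x : X) : mf i =1 id -> mact i x = x.
Proof. exact: HX.1. Qed.

Lemma act_comp m m1 m2 (x : X) : mf m =1 mf m1 \o mf m2 -> mact m x = mact m1 (mact m2 x).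
Proof. exact: HX.2. Qed.

Lemma supp_sub (C D : seq atom) (x : X) :
  is_support mf X C x -> {subset C <= D} -> is_support mf X D x.
Proof. by move=> HC CD m1 m2 E; apply: HC => z /CD; apply: E. Qed.

Lemma supp_map C (x : X) m :
  is_support mf X C x -> is_support mf X (map (mf m) C) (mact m x).
Proof.
move=> HC m1 m2 E.
rewrite -(@act_comp (comp m1 m)) // -(@act_comp (comp m2 m)) //.
by apply: HC => z zC; rewrite !mf_comp /=; apply/E/map_f.
Qed.

Lemma support1_agree a (x : X) m1 m2 :
  is_support mf X [:: a] x -> mf m1 a = mf m2 a -> mact m1 x = mact m2 x.
Proof. by move=> Ha E; apply: Ha => z; rewrite inE => /eqP ->. Qed.

Lemma least_eq (C1 C2 : seq atom) (x : X) :
  is_least_support mf X C1 x -> is_least_support mf X C2 x -> C1 =i C2.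
Proof. by move=> [H1 L1] [H2 L2] z; apply/idP/idP; [apply: L1 | apply: L2]. Qed.
End Actions.

Section SbSupports.
Variable X : mset Sb.
Hypothesis HX : is_maction sbf X.

(* Renaming the atom b to a fresh c is invisible to x (b is outside A) and
   turns the support B into one avoiding b. *)
Lemma supp_remove A B b (x : X) :
  is_support sbf X A x -> is_support sbf X B x -> b \notin A ->
  is_support sbf X (filter (predC1 b) B) x.
Proof.
move=> HA HB bA m1 m2 E.
set c := fresh (A ++ B).
have /[!(mem_cat, negb_or)] /andP[cA cB] : c \notin A ++ B := fresh_notin _.
set rho := upd idSb b c.
have rho_x : mact rho x = x.
  rewrite (HA rho idSb) ?(act_id HX) // => z zA /=.
  by rewrite updf_neq //; apply: contraTneq zA => ->.
have HB' : is_support sbf X (map (sbf rho) B) x.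
  by rewrite -{1}rho_x; apply: (supp_map sb_compE).
have -> : mact m1 x = mact (upd m1 c (sbf m2 c)) x.
  apply: HA => z zA /=; rewrite updf_neq //; apply: contraTneq zA => ->.
  exact: cA.
apply: HB' => _ /mapP[w wB ->] /=.
have [->|wb] := eqVneq w b; first by rewrite !updf_eq.
have wc : w != c by apply: contraTneq wB => ->.
by rewrite !updf_neq //; apply: E; rewrite mem_filter /= wb.
Qed.

(* Induction on the size of a support: a non-least one can be shrunk. *)
Lemma least_support_exists C (x : X) :
  is_support sbf X C x -> exists L, is_least_support sbf X L x.
Proof.
have [n] := ubnP (size C); elim: n C => // n IH C /ltnSE sizeC HC.
have [[D [b [HD bC bD]]]|least] :=
  classic (exists D b, [/\ is_support sbf X D x, b \in C & b \notin D]); last first.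
  exists C; split=> // D HD b bC; apply/negPn/negP => bD.
  by apply: least; exists D, b.
apply: (IH (filter (predC1 b) C)) (supp_remove HD HC bD).
rewrite size_filter; apply: leq_trans sizeC.
by rewrite -(count_predC (pred1 b) C) -{1}[count _ C]add0n ltn_add2r -has_count has_pred1.
Qed.
End SbSupports.

Section PermActions.
Variable P : mset Perm.
Hypothesis HP : is_maction permf P.

Lemma pact_comp p q (x : P) : mact p (mact q x) = mact (perm_comp p q) x.
Proof. by rewrite (act_comp HP (m := perm_comp p q) (m1 := p) (m2 := q)). Qed.

Lemma pactK p (x : P) : mact (perm_inv p) (mact p x) = x.
Proof. by rewrite pact_comp; apply: (act_id HP) => z /=; apply: permK. Qed.

Lemma pactKV p (x : P) : mact p (mact (perm_inv p) x) = x.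
Proof. by rewrite pact_comp; apply: (act_id HP) => z /=; apply: permKV. Qed.

Lemma fix_is_support C (x : P) :
  (forall p : Perm, {in C, permf p =1 id} -> mact p x = x) -> is_support permf P C x.
Proof.
move=> fixC m1 m2 E.
rewrite (act_comp HP (m1 := m2) (m2 := perm_comp (perm_inv m2) m1)); last first.
  by move=> z /=; rewrite permKV.
rewrite fixC // => z zC.
by rewrite -[LHS]/(permf (perm_inv m2) (permf m1 z)) E // permK.
Qed.

Lemma support_fix C (x : P) p :
  is_support permf P C x -> {in C, permf p =1 id} -> mact p x = x.
Proof. by move=> HC pC; rewrite (HC p idPerm) // (act_id HP). Qed.

Lemma least_map C (x : P) p :
  is_least_support permf P C x -> is_least_support permf P (map (permf p) C) (mact p x).
Proof.
move=> [HC L]; split; first exact: (supp_map perm_compE).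
move=> D HD z; rewrite mem_map_perm => zC.
have HD' : is_support permf P (map (permf (perm_inv p)) D) x.
  by rewrite -(pactK p x); apply: (supp_map perm_compE).
by have := L _ HD' _ zC; rewrite mem_map_perm_inv permKV.
Qed.
End PermActions.

Lemma U_maction (X : mset Sb) : is_maction sbf X -> is_maction permf (U X).
Proof. by move=> [H1 H2]; split=> [i x|m m1 m2 x]; [apply: H1 | apply: H2]. Qed.

Lemma sb_act_comp (Z : mset Sb) : is_maction sbf Z ->
  forall m1 m2 (z : Z), mact m1 (mact m2 z) = mact (sb_comp m1 m2) z.
Proof. by move=> HZ m1 m2 z; rewrite (act_comp HZ (m := sb_comp m1 m2) (m1 := m1) (m2 := m2)). Qed.

Lemma sb_pactK (Z : mset Sb) : is_maction sbf Z ->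
  forall p (z : Z), mact (perm_sb (perm_inv p)) (mact (perm_sb p) z) = z.
Proof. by move=> /U_maction HZ p; apply: (pactK HZ). Qed.

Lemma sb_pactKV (Z : mset Sb) : is_maction sbf Z ->
  forall p (z : Z), mact (perm_sb p) (mact (perm_sb (perm_inv p)) z) = z.
Proof. by move=> /U_maction HZ p; apply: (pactKV HZ). Qed.

Lemma pfun_maction (A B : mset Perm) :
  is_maction permf A -> is_maction permf B -> is_maction permf (pfun_mset A B).
Proof.
move=> HA HB; split=> [i f iE|m m1 m2 f E] /=; apply: functional_extensionality => a.
  rewrite (act_id HA (i := perm_inv i)); last by move=> z; rewrite -{1}(iE z) permK.
  by case: (f a) => //= y; rewrite (act_id HB).
rewrite (act_comp HA (m1 := perm_inv m2) (m2 := perm_inv m1)); last first.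
  by move=> z; apply: (@perm_inj m); rewrite permKV E /= !permKV.
by case: (f _) => //= y; rewrite (act_comp HB (m1 := m1) (m2 := m2)).
Qed.

Section Restriction.
Variables (M : Type) (mf : M -> atom -> atom) (T : mset M) (Q : T -> Prop).
Hypothesis Q_act : forall m (u : {t | Q t}), Q (mact m (proj1_sig u)).
Let R : mset M := MSet {t | Q t} (fun m => restrict_act Q (mact m)).

Lemma restrict_actE m (u : R) : proj1_sig (mact m u) = mact m (proj1_sig u).
Proof. by rewrite /= /restrict_act; case: excluded_middle_informative (Q_act m u). Qed.

Lemma restrict_support C (u : R) :
  is_support mf R C u <-> is_support mf T C (proj1_sig u).
Proof.
split=> H m1 m2 E; first by rewrite -!restrict_actE (H m1 m2 E).
by apply: sig_ext; rewrite !restrict_actE; apply: H.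
Qed.

Lemma restrict_least_support C (u : R) :
  is_least_support mf R C u <-> is_least_support mf T C (proj1_sig u).
Proof.
split=> -[H1 H2]; split=> [|D /restrict_support]; try exact: H2.
  exact/restrict_support.
by move/restrict_support: H1.
Qed.
End Restriction.

Section NominalSb.
Variable X : mset Sb.
Hypothesis nX : is_nominal sbf X.

Lemma lsupp_ex (x : X) : exists L, is_least_support sbf X L x.
Proof. by have [C /(least_support_exists nX.1)] := nX.2 x. Qed.

Definition lsupp (x : X) : seq atom :=
  proj1_sig (constructive_indefinite_description _ (lsupp_ex x)).

Lemma lsupp_least (x : X) : is_least_support sbf X (lsupp x) x.
Proof. exact: proj2_sig (constructive_indefinite_description _ (lsupp_ex x)). Qed.

Lemma lsupp_support (x : X) : is_support sbf X (lsupp x) x.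
Proof. exact: (lsupp_least x).1. Qed.

Lemma lsupp_sub (x : X) D : is_support sbf X D x -> {subset lsupp x <= D}.
Proof. exact: (lsupp_least x).2. Qed.

(* If a in supp(x) were outside a Perm-support C, swapping a with a fresh b
   would fix x and yet move supp(x) onto b. *)
Lemma perm_support_sb C (x : X) : is_support permf (U X) C x -> is_support sbf X C x.
Proof.
move=> HC; apply: (supp_sub (lsupp_support (x := x))) => a aL; apply/negPn/negP => aC.
set b := fresh (lsupp x ++ C).
have /[!(mem_cat, negb_or)] /andP[bL bC] : b \notin lsupp x ++ C := fresh_notin _.
have swap_x : mact (swapSb a b) x = x.
  have := HC (swapPerm a b) idPerm; rewrite /= => -> //; first exact: (act_id nX.1).
  by move=> z; apply: swapf_notin.
have /lsupp_sub /(_ a aL) : is_support sbf X (map (swapf a b) (lsupp x)) x.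
  by have := supp_map sb_compE nX.1 (m := swapSb a b) (lsupp_support (x := x)); rewrite swap_x.
by rewrite -[a in a \in _](swapf_r a b) (mem_map (can_inj (swapfK a b))) (negbTE bL).
Qed.

Lemma lsupp_least_U (x : X) : is_least_support permf (U X) (lsupp x) x.
Proof.
split=> [m1 m2|D /perm_support_sb]; last exact: lsupp_sub.
exact: lsupp_support.
Qed.

Lemma lsupp_perm (p : Perm) (x : X) :
  lsupp (mact (perm_sb p) x) =i map (permf p) (lsupp x).
Proof.
apply: least_eq (lsupp_least_U _) _.
exact: (least_map (U_maction nX.1) p (lsupp_least_U x)).
Qed.

Hypothesis dX : dim_le sbf X 1.

(* The atom of x; it is junk (0) when x has empty support. *)
Definition atom_of (x : X) : atom := head 0 (lsupp x).

Lemma atom_of_support (x : X) : is_support sbf X [:: atom_of x] x.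
Proof.
apply: (supp_sub (lsupp_support (x := x))); rewrite /atom_of.
have := dX (lsupp_least x); case: (lsupp x) => [|h t] //= size_le z zL.
rewrite inE; apply/negPn/negP => zh.
have : size [:: z; h] <= size (undup (h :: t)).
  apply: uniq_leq_size; first by rewrite /= inE zh.
  by move=> w; rewrite !inE mem_undup => /orP[] /eqP ->; rewrite ?zL ?mem_head.
by rewrite leqNgt ltnS size_le.
Qed.

Lemma support_empty_or_atom (x : X) : is_support sbf X [::] x \/ atom_of x \in lsupp x.
Proof.
rewrite /atom_of; have := lsupp_support (x := x).
by case: (lsupp x) => [|h t]; [left | right; rewrite mem_head].
Qed.

Lemma support_atom_unique a a' (x : X) :
  is_support sbf X [:: a] x -> is_support sbf X [:: a'] x ->
  a = a' \/ is_support sbf X [::] x.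
Proof.
move=> /lsupp_sub Ha /lsupp_sub Ha'.
case: (support_empty_or_atom x) => [|ax]; [by right | left].
by move: (Ha _ ax) (Ha' _ ax); rewrite !inE => /eqP <- /eqP.
Qed.
End NominalSb.
Arguments lsupp_support {X} nX x [m1 m2] _.
Arguments atom_of_support {X} nX dX x [m1 m2] _.

Definition apart (s t : seq atom) : bool := all (fun z => z \notin t) s.

Lemma perp_apart (A : mset Perm) (Z : mset Sb) (nZ : is_nominal sbf Z) C (u : A) (x : Z) :
  is_least_support permf A C u -> perp permf A (U Z) u x <-> apart C (lsupp nZ x).
Proof.
move=> HC; split=> [[Cu [Cx [H1 H2 H3]]]|/allP H].
  apply/allP => z zC; rewrite -(least_eq H2 (lsupp_least_U nZ x)).
  by apply: H3; rewrite (least_eq H1 HC).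
by exists C, (lsupp nZ x); split=> //; apply: lsupp_least_U.
Qed.

Section Transposition.
Variables X Y : mset Sb.
Hypotheses (nX : is_nominal sbf X) (nY : is_nominal sbf Y) (dX : dim_le sbf X 1).

Let HX : is_maction sbf X := nX.1.
Let HY : is_maction sbf Y := nY.1.
Let HUX : is_maction permf (U X) := U_maction HX.
Let HUY : is_maction permf (U Y) := U_maction HY.
Let HP : is_maction permf (pfun_mset (U X) (U Y)) := pfun_maction HUX HUY.

Local Notation P := (pfun_mset (U X) (U Y)).
Local Notation lsuppX := (lsupp nX).
Local Notation lsuppY := (lsupp nY).

Lemma pfun_act_fixed D (f : P) p (x : X) :
  is_support permf P D f -> {in D, permf p =1 id} ->
  f (mact (perm_sb p) x) = omap (mact (perm_sb p)) (f x).
Proof.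
by move=> HD pD; rewrite -[in LHS](support_fix HP HD pD) /= sb_pactK.
Qed.

Lemma pfun_value_support D (f : P) S (x : X) y :
  is_support permf P D f -> is_support sbf X S x -> f x = Some y ->
  is_support sbf Y (D ++ S) y.
Proof.
move=> HD HS fx; apply: (perm_support_sb nY); apply: (fix_is_support HUY) => p pDS.
have px : mact (perm_sb p) x = x.
  by rewrite (HS _ idSb) ?(act_id HX) // => z zS; apply: pDS; rewrite mem_cat zS orbT.
have E : f (mact (perm_sb p) x) = omap (mact (perm_sb p)) (f x).
  by apply: pfun_act_fixed HD _ => z zD; apply: pDS; rewrite mem_cat zD.
by move: E; rewrite px fx => -[].
Qed.

Lemma swap_support1 a d (x : X) :
  is_support sbf X [:: a] x -> is_support sbf X [:: d] (mact (swapSb a d) x).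
Proof. by move=> /(supp_map sb_compE HX (m := swapSb a d)); rewrite /= swapf_l. Qed.

Lemma apart_swap D a d (x : X) : is_support sbf X [:: a] x -> d \notin D ->
  apart D (lsuppX (mact (swapSb a d) x)).
Proof.
move=> /(swap_support1 (d := d)) /lsupp_sub sub dD; apply/allP => z zD.
by apply/negP => /sub; rewrite inE => /eqP zd; rewrite -zd zD in dD.
Qed.

(* The value at (n, x) of the exponential transpose of f: the atom a of x
   is first renamed to a fresh d, so that f is defined, and then n[d := a]
   puts it back. *)
Definition fresh_eval (f : P) (n : Sb) (x : X) (a d : atom) : option Y :=
  omap (mact (upd n d a)) (f (mact (swapSb a d) x)).

Definition defined_apart D (f : P) : Prop :=
  is_support permf P D f /\ forall x : X, apart D (lsuppX x) -> f x <> None.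

Definition witness (f : P) (b : atom) : Prop :=
  exists (a : X) (y : Y) Ca Cy,
    [/\ f a = Some y, is_least_support permf (U X) Ca a,
        is_least_support permf (U Y) Cy y, b \in Cy & b \notin Ca].

Section FreshEval.
Variables (D : seq atom) (f : P).
Hypothesis Hf : defined_apart D f.

Lemma fresh_eval_some a d (x : X) : is_support sbf X [:: a] x -> d \notin D ->
  exists y, f (mact (swapSb a d) x) = Some y.
Proof.
move=> Ha dD; case E: (f _) => [y|]; first by exists y.
by have := Hf.2 _ (apart_swap Ha dD).
Qed.

Lemma fresh_eval_fresh_indep n a d d' (x : X) : is_support sbf X [:: a] x ->
  d \notin D -> d' \notin D -> fresh_eval f n x a d = fresh_eval f n x a d'.
Proof.
move=> Ha dD d'D; have [y fy] := fresh_eval_some Ha dD.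
rewrite /fresh_eval.
have -> : mact (swapSb a d') x = mact (perm_sb (swapPerm d d')) (mact (swapSb a d) x).
  by rewrite (sb_act_comp HX); apply: (support1_agree Ha); rewrite /= !swapf_l.
rewrite (pfun_act_fixed _ Hf.1 (p := swapPerm d d') (swap_fix dD d'D)) fy /=; congr Some.
rewrite (sb_act_comp HY); apply: (pfun_value_support Hf.1 (swap_support1 (d := d) Ha) fy) => z.
rewrite mem_cat inE => /orP[zD|/eqP->] /=; last by rewrite swapf_l !updf_eq.
have [zd zd'] : z != d /\ z != d' by split; apply: contraTneq zD => ->.
by rewrite swapf_out // !updf_neq.
Qed.

Lemma fresh_eval_empty n a d (x : X) : is_support sbf X [::] x -> d \notin D ->
  fresh_eval f n x a d = omap (mact n) (f x).
Proof.
move=> Hx dD; rewrite /fresh_eval (Hx _ idSb) // (act_id HX) //.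
case fx: (f x) => [y|] //=; congr Some.
apply: (pfun_value_support Hf.1 Hx fx) => z; rewrite cats0 => zD /=.
by rewrite updf_neq //; apply: contraTneq zD => ->.
Qed.

Lemma fresh_eval_indep n a a' d d' (x : X) :
  is_support sbf X [:: a] x -> is_support sbf X [:: a'] x -> d \notin D -> d' \notin D ->
  fresh_eval f n x a d = fresh_eval f n x a' d'.
Proof.
move=> Ha Ha' dD d'D; case: (support_atom_unique nX Ha Ha') => [<-|H0].
  exact: fresh_eval_fresh_indep.
by rewrite !fresh_eval_empty.
Qed.

Lemma fresh_eval_support D' n m1 m2 a d (x : X) :
  is_support permf P D' f -> is_support sbf X [:: a] x -> {in D', sbf m1 =1 sbf m2} ->
  fresh_eval f (sb_comp n m1) x a d = fresh_eval f (sb_comp n m2) x a d.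
Proof.
move=> HD' Ha E; rewrite /fresh_eval; case fy: (f _) => [y|] //=; congr Some.
apply: (pfun_value_support HD' (swap_support1 (d := d) Ha) fy) => z; rewrite mem_cat inE /=.
have [->|zd] := eqVneq z d; first by rewrite !updf_eq.
by rewrite !updf_neq //= orbF => /E ->.
Qed.

Lemma fresh_eval_support_nonwitness D' b n m1 m2 a d (x : X) :
  is_support permf P D' f -> is_support sbf X [:: a] x -> ~ witness f b -> b != d ->
  {in filter (predC1 b) D', sbf m1 =1 sbf m2} ->
  fresh_eval f (sb_comp n m1) x a d = fresh_eval f (sb_comp n m2) x a d.
Proof.
move=> HD' Ha nwb bd E; rewrite /fresh_eval; case fy: (f _) => [y|] //=; congr Some.
have bY : b \notin lsuppY y.
  apply/negP => bY; apply: nwb.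
  exists (mact (swapSb a d) x), y, (lsuppX (mact (swapSb a d) x)), (lsuppY y).
  split=> //; try exact: lsupp_least_U.
  by apply/negP => /(lsupp_sub (swap_support1 (d := d) Ha)); rewrite inE (negbTE bd).
apply: (lsupp_support nY y) => z zY /=.
have [->|zd] := eqVneq z d; first by rewrite !updf_eq.
rewrite !updf_neq //=; congr (sbf n _); apply: E; rewrite mem_filter /=.
have zb : z != b by apply: contraNneq bY => <-.
have := lsupp_sub (pfun_value_support HD' (swap_support1 (d := d) Ha) fy) zY.
by rewrite mem_cat inE (negbTE zd) orbF zb => ->.
Qed.

Lemma transpose_ex n (x : X) : exists y, fresh_eval f n x (atom_of nX x) (fresh D) = Some y.
Proof.
have [y fy] := fresh_eval_some (atom_of_support nX dX x) (fresh_notin D).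
by exists (mact (upd n (fresh D) (atom_of nX x)) y); rewrite /fresh_eval fy.
Qed.

Definition transpose (n : Sb) (x : X) : Y :=
  proj1_sig (constructive_indefinite_description _ (transpose_ex n x)).

Lemma transposeE n a d (x : X) : is_support sbf X [:: a] x -> d \notin D ->
  fresh_eval f n x a d = Some (transpose n x).
Proof.
move=> Ha dD; rewrite -(proj2_sig (constructive_indefinite_description _ (transpose_ex n x))).
exact: fresh_eval_indep Ha (atom_of_support nX dX x) dD (fresh_notin D).
Qed.

Lemma transpose_equiv m n (x : X) :
  transpose (sb_comp m n) (mact m x) = mact m (transpose n x).
Proof.
set a := atom_of nX x; set d := fresh D.
have Ha : is_support sbf X [:: a] x := atom_of_support nX dX x.
have Hma : is_support sbf X [:: sbf m a] (mact m x) := supp_map sb_compE HX Ha.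
have [y fy] := fresh_eval_some Ha (fresh_notin D).
have := transposeE n Ha (fresh_notin D); rewrite /fresh_eval fy => -[<-].
apply: Some_inj; rewrite -(transposeE _ Hma (fresh_notin D)) /fresh_eval.
have -> : mact (swapSb (sbf m a) d) (mact m x) = mact (swapSb a d) x.
  by rewrite (sb_act_comp HX); apply: (support1_agree Ha); rewrite /= !swapf_l.
rewrite fy /= (sb_act_comp HY); do 2!f_equal; apply: sb_ext => z /=.
by rewrite /updf; case: eqP.
Qed.

Lemma transpose_support D' :
  is_support permf P D' f -> is_support sbf (expamb X Y) D' transpose.
Proof.
move=> HD' m1 m2 E; apply: functional_extensionality => n.
apply: functional_extensionality => x /=.
have Ha := atom_of_support nX dX x.
apply: Some_inj; rewrite -!(transposeE _ Ha (fresh_notin D)).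
exact: fresh_eval_support HD' Ha E.
Qed.

(* For x apart from D, the atom of x is itself fresh and the swap is trivial. *)
Lemma transpose_id (x : X) : apart D (lsuppX x) -> f x = Some (transpose idSb x).
Proof.
move=> /allP Dx; have Ha := atom_of_support nX dX x.
case: (support_empty_or_atom nX x) => [H0|ax].
  rewrite -(transposeE _ Ha (fresh_notin D)) fresh_eval_empty ?fresh_notin //.
  by case: (f x) => //= y; rewrite (act_id HY).
have aD : atom_of nX x \notin D by apply: contra (Dx _) _; rewrite ax.
rewrite -(transposeE _ Ha aD) /fresh_eval (act_id HX (i := swapSb _ _)); last exact: swapf_aa.
by case: (f x) => //= y; rewrite (act_id HY) // => z /=; rewrite /updf; case: eqP.
Qed.

Lemma transpose_exp_pred : exp_pred transpose.
Proof. by split; [exact: transpose_equiv | exists D; exact: transpose_support Hf.1]. Qed.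
End FreshEval.

Lemma apart_perm (g : Perm) C (x : X) :
  apart (map (permf g) C) (lsuppX x) = apart C (lsuppX (mact (perm_sb (perm_inv g)) x)).
Proof.
rewrite /apart all_map; apply: eq_all => z.
by rewrite (lsupp_perm nX) mem_map_perm_inv.
Qed.

Lemma witness_act (g : Perm) (f : P) b : witness f b -> witness (mact g f) (permf g b).
Proof.
move=> [a [y [Ca [Cy [fa Ha Hy bCy bCa]]]]].
exists (mact (perm_sb g) a), (mact (perm_sb g) y), (map (permf g) Ca), (map (permf g) Cy).
split; rewrite ?(mem_map (@perm_inj g)) //.
- by rewrite /= sb_pactK // fa.
- exact: (least_map HUX g Ha).
- exact: (least_map HUY g Hy).
Qed.

Lemma witness_mem D (f : P) b :
  (forall a y, f a = Some y -> is_support sbf Y (D ++ lsuppX a) y) -> witness f b -> b \in D.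
Proof.
move=> Dval [a [y [Ca [Cy [fa Ha Hy bCy bCa]]]]].
move: bCy; rewrite (least_eq Hy (lsupp_least_U nY y)) => /(lsupp_sub (Dval _ _ fa)).
by rewrite mem_cat -(least_eq Ha (lsupp_least_U nX a)) (negbTE bCa) orbF.
Qed.

(* A point where f is defined yields a least support through [perp];
   if there is none, f is empty and [::] is its least support. *)
Lemma wand_least_support_ex (f : wand (U X) (U Y)) :
  exists C, is_least_support permf P C (proj1_sig f).
Proof.
apply: NNPP => none; have [_ dom _] := proj2_sig f.
have f0 a : proj1_sig f a = None.
  by apply: NNPP => /dom [Cx [_ [Hx _ _]]]; apply: none; exists Cx.
apply: none; exists [::]; split=> // m1 m2 _ /=.
by apply: functional_extensionality => a; rewrite !f0.
Qed.

Definition wand_supp (f : wand (U X) (U Y)) : seq atom :=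
  proj1_sig (constructive_indefinite_description _ (wand_least_support_ex f)).

Lemma wand_supp_least f : is_least_support permf P (wand_supp f) (proj1_sig f).
Proof. exact: proj2_sig (constructive_indefinite_description _ (wand_least_support_ex f)). Qed.

Lemma wand_domE (f : wand (U X) (U Y)) x :
  proj1_sig f x <> None <-> apart (wand_supp f) (lsuppX x).
Proof.
by have [_ dom _] := proj2_sig f; rewrite dom; exact: (perp_apart nX x (wand_supp_least f)).
Qed.

Lemma wand_witnessP (f : wand (U X) (U Y)) b :
  b \in wand_supp f <-> witness (proj1_sig f) b.
Proof. by have [_ _ wit] := proj2_sig f; exact: wit (wand_supp_least f) b. Qed.

Lemma wand_defined_apart f : defined_apart (wand_supp f) (proj1_sig f).
Proof. by split=> [|x /wand_domE]; [exact: (wand_supp_least f).1 | ]. Qed.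

Lemma wand_pred_act (g : Perm) (f : wand (U X) (U Y)) :
  wand_pred (mact g (proj1_sig f : P)).
Proof.
have HC := least_map HP g (wand_supp_least f).
split; first by exists (map (permf g) (wand_supp f)); exact: HC.1.
  move=> a; rewrite (perp_apart nX a HC) apart_perm -wand_domE /=.
  by case: (proj1_sig f _).
move=> C HC' b; rewrite (least_eq HC' HC) mem_map_perm wand_witnessP.
split=> [/(witness_act g)|/(witness_act (perm_inv g))]; first by rewrite permKV.
by have /= -> := pactK HP g (proj1_sig f).
Qed.

Lemma wand_actE (g : Perm) (f : wand (U X) (U Y)) :
  proj1_sig (mact g f) = mact g (proj1_sig f : P).
Proof. exact: (restrict_actE (T := P) wand_pred_act). Qed.

Lemma wand_least_supportE C (f : wand (U X) (U Y)) :
  is_least_support permf (wand (U X) (U Y)) C f <-> is_least_support permf P C (proj1_sig f).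
Proof. exact: (restrict_least_support (T := P) _ wand_pred_act). Qed.

Lemma expamb_maction : is_maction sbf (expamb X Y).
Proof.
split=> [i F iE|m m1 m2 F E] /=; apply: functional_extensionality => n;
  apply: functional_extensionality => a; f_equal; apply: sb_ext => z /=;
  by rewrite ?iE ?E.
Qed.

Lemma exp_pred_act m (F : expSb X Y) : exp_pred (mact m (proj1_sig F : expamb X Y)).
Proof.
have [equiv [C HC]] := proj2_sig F; split=> [k n a|] /=.
  by rewrite -equiv; congr (proj1_sig F _ _); exact: sb_ext.
by exists (map (sbf m) C); apply: (supp_map sb_compE expamb_maction).
Qed.

Lemma exp_actE m (F : expSb X Y) : proj1_sig (mact m F) = mact m (proj1_sig F : expamb X Y).
Proof. exact: (restrict_actE (T := expamb X Y) exp_pred_act). Qed.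

Lemma exp_app_support S (F : expamb X Y) m1 m2 x :
  is_support sbf (expamb X Y) S F -> {in S, sbf m1 =1 sbf m2} -> F m1 x = F m2 x.
Proof.
move=> HS /HS /(congr1 (fun G : expamb X Y => G idSb x)).
by rewrite /= !sb_1comp.
Qed.

Lemma exp_least_support_ex (F : expSb X Y) :
  exists L, is_least_support sbf (expamb X Y) L (proj1_sig F).
Proof. by have [_ [C /(least_support_exists expamb_maction)]] := proj2_sig F. Qed.

Definition exp_supp (F : expSb X Y) : seq atom :=
  proj1_sig (constructive_indefinite_description _ (exp_least_support_ex F)).

Lemma exp_supp_least F : is_least_support sbf (expamb X Y) (exp_supp F) (proj1_sig F).
Proof. exact: proj2_sig (constructive_indefinite_description _ (exp_least_support_ex F)). Qed.

Lemma exp_value_support (F : expSb X Y) (a : X) :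
  is_support sbf Y (exp_supp F ++ lsuppX a) (proj1_sig F idSb a).
Proof.
apply: (perm_support_sb nY); apply: (fix_is_support HUY) => p pLa /=.
have pa : mact (perm_sb p) a = a.
  rewrite (lsupp_support nX a (m2 := idSb)) ?(act_id HX) // => z za.
  by apply: pLa; rewrite mem_cat za orbT.
have [equiv _] := proj2_sig F; rewrite -equiv pa sb_comp1.
apply: exp_app_support (exp_supp_least F).1 _ => z zL.
by apply: pLa; rewrite mem_cat zL.
Qed.

Definition untranspose (F : expSb X Y) : P :=
  fun x => if apart (exp_supp F) (lsuppX x) then Some (proj1_sig F idSb x) else None.

Section Untranspose.
Variable F : expSb X Y.
Local Notation L := (exp_supp F).
Local Notation Fv := (proj1_sig F).

Let F_equiv : forall m n a, Fv (sb_comp m n) (mact m a) = mact m (Fv n a) :=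
  (proj2_sig F).1.

Lemma untranspose_support : is_support permf P L (untranspose F).
Proof.
apply: (fix_is_support HP) => p pL; apply: functional_extensionality => x /=.
rewrite /untranspose -apart_perm.
have -> : map (permf p) L = L :> seq atom.
  by rewrite -[RHS]map_id; apply/eq_in_map => z /pL.
case: ifP => //= _; congr Some.
rewrite -F_equiv sb_pactKV // sb_comp1.
by apply: exp_app_support (exp_supp_least F).1 _.
Qed.

Lemma untranspose_swap a d (x : X) : is_support sbf X [:: a] x -> d \notin L ->
  untranspose F (mact (swapSb a d) x) = Some (Fv idSb (mact (swapSb a d) x)).
Proof. by move=> Ha dL; rewrite /untranspose apart_swap. Qed.

Lemma fresh_eval_untranspose n a d (x : X) : is_support sbf X [:: a] x -> d \notin L ->
  fresh_eval (untranspose F) n x a d = Some (Fv n x).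
Proof.
move=> Ha dL; rewrite /fresh_eval untranspose_swap //=; congr Some.
rewrite -F_equiv sb_comp1 (sb_act_comp HX).
rewrite (support1_agree Ha (m2 := idSb)) ?(act_id HX) /= ?swapf_l ?updf_eq //.
apply: exp_app_support (exp_supp_least F).1 _ => z zL /=.
by rewrite updf_neq //; apply: contraTneq zL => ->.
Qed.

Lemma untranspose_defined_apart : defined_apart L (untranspose F).
Proof. by split=> [|x Lx]; [exact: untranspose_support | rewrite /untranspose Lx]. Qed.

Lemma transpose_untranspose D (H : defined_apart D (untranspose F)) :
  {subset L <= D} -> transpose H = Fv.
Proof.
move=> LD; apply: functional_extensionality => n; apply: functional_extensionality => x.
have Ha := atom_of_support nX dX x.
have dL : fresh D \notin L by apply: contra (LD _) (fresh_notin D).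
apply: Some_inj; rewrite -(transposeE H n Ha (fresh_notin D)).
exact: fresh_eval_untranspose.
Qed.

Lemma untranspose_least : is_least_support permf P L (untranspose F).
Proof.
split=> [|D HD]; first exact: untranspose_support.
have := transpose_support untranspose_defined_apart HD.
by rewrite transpose_untranspose //; apply: (exp_supp_least F).2.
Qed.

(* Without a witness for b, the values of untranspose F do not involve b,
   so L without b would support F. *)
Lemma untranspose_witness b : b \in L -> witness (untranspose F) b.
Proof.
move=> bL; apply: NNPP => nwb.
suff /(exp_supp_least F).2 /(_ b bL) : is_support sbf (expamb X Y) (filter (predC1 b) L) Fv.
  by rewrite mem_filter /= eqxx.
move=> m1 m2 E; apply: functional_extensionality => n; apply: functional_extensionality => x /=.
have Ha := atom_of_support nX dX x; have dL := fresh_notin L.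
apply: Some_inj; rewrite -!(fresh_eval_untranspose _ Ha dL).
apply: fresh_eval_support_nonwitness untranspose_support Ha nwb _ E.
by apply: contraTneq bL => ->.
Qed.

Lemma untranspose_wand_pred : wand_pred (untranspose F).
Proof.
split; first by exists L; exact: untranspose_support.
  by move=> a; rewrite (perp_apart nX a untranspose_least) /untranspose; case: ifP.
move=> C HC b; rewrite (least_eq HC untranspose_least).
split; first exact: untranspose_witness.
apply: witness_mem => a y.
exact: pfun_value_support untranspose_support (lsupp_least nX a).1.
Qed.
End Untranspose.

Definition wand_to_exp (f : wand (U X) (U Y)) : U (expSb X Y) :=
  exist _ (transpose (wand_defined_apart f)) (transpose_exp_pred (wand_defined_apart f)).

Definition exp_to_wand (F : expSb X Y) : wand (U X) (U Y) :=
  exist _ (untranspose F) (untranspose_wand_pred F).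

Lemma exp_to_wandK : cancel exp_to_wand wand_to_exp.
Proof.
move=> F; apply: sig_ext; apply: transpose_untranspose => z.
by rewrite (least_eq (wand_supp_least (exp_to_wand F)) (untranspose_least F)).
Qed.

Lemma exp_supp_wand_to_exp f : exp_supp (wand_to_exp f) =i wand_supp f.
Proof.
move=> c; apply/idP/idP.
  have := (exp_supp_least (wand_to_exp f)).2 _ (transpose_support _ (wand_supp_least f).1).
  by apply.
move/wand_witnessP; apply: witness_mem => a y fa.
have /wand_domE /(transpose_id (wand_defined_apart f)) : proj1_sig f a <> None by rewrite fa.
by rewrite fa => -[->]; apply: (exp_value_support (F := wand_to_exp f)).
Qed.

Lemma wand_to_expK : cancel wand_to_exp exp_to_wand.
Proof.
move=> f; apply: sig_ext; apply: functional_extensionality => x /=.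
rewrite /untranspose /apart (eq_all_r (exp_supp_wand_to_exp f)) -/(apart _ _).
case: ifPn => [/(transpose_id (wand_defined_apart f)) -> // | /negP nap].
by case fx: (proj1_sig f x) => [y|] //; case: nap; apply/wand_domE; rewrite fx.
Qed.

Lemma wand_supp_act (g : Perm) f :
  wand_supp (mact g f) =i map (permf g) (wand_supp f).
Proof.
apply: least_eq (wand_supp_least _) _; rewrite wand_actE.
exact: (least_map HP g (wand_supp_least f)).
Qed.

Lemma wand_to_exp_equiv (g : Perm) f : wand_to_exp (mact g f) = mact g (wand_to_exp f).
Proof.
apply: sig_ext; rewrite [RHS](exp_actE (perm_sb g)).
apply: functional_extensionality => n; apply: functional_extensionality => x /=.
have Ha := atom_of_support nX dX x; move: (atom_of nX x) Ha => a Ha.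
have := fresh_notin (wand_supp f); move: (fresh _) => e eC.
have geC : permf g e \notin wand_supp (mact g f).
  by rewrite wand_supp_act (mem_map (@perm_inj g)).
apply: Some_inj; rewrite -(transposeE _ n Ha geC).
rewrite -(transposeE _ (sb_comp n (perm_sb g)) Ha eC) /fresh_eval wand_actE /=.
have -> : mact (perm_inv_sb g) (mact (swapSb a (permf g e)) x) = mact (swapSb a e) x.
  rewrite (sb_act_comp HX); apply: (support1_agree Ha) => /=.
  by rewrite !swapf_l; apply: permK.
case: (proj1_sig f _) => //= y; rewrite (sb_act_comp HY); do 2!f_equal.
by apply: sb_ext => z /=; rewrite /updf (inj_eq (@perm_inj g)).
Qed.
End Transposition.

Section Naturality.
Variables X X' Y Y' : mset Sb.
Hypotheses (nX : is_nominal sbf X) (nX' : is_nominal sbf X').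
Hypotheses (nY : is_nominal sbf Y) (nY' : is_nominal sbf Y').
Hypotheses (dX : dim_le sbf X 1) (dX' : dim_le sbf X' 1).
Variables (h : X' -> X) (k : Y -> Y').
Hypotheses (h_equiv : equivariant h) (k_equiv : equivariant k).
Variable f : wand (U X) (U Y).

Local Notation F := (transpose dX (wand_defined_apart nX f)).

Lemma equivariant_support S (a : X') : is_support sbf X' S a -> is_support sbf X S (h a).
Proof. by move=> HS m1 m2 E; rewrite -!h_equiv (HS m1 m2 E). Qed.

Definition transpose_map (n : Sb) (a : X') : Y' := k (F n (h a)).

Lemma transpose_map_support : is_support sbf (expamb X' Y') (wand_supp f) transpose_map.
Proof.
move=> m1 m2 E; apply: functional_extensionality => n.
apply: functional_extensionality => a /=; rewrite /transpose_map; congr k.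
have := transpose_support nY dX (wand_defined_apart nX f) (wand_supp_least f).1 E.
by move=> /(congr1 (fun G : expamb X Y => G n (h a))).
Qed.

Lemma transpose_map_exp_pred : exp_pred transpose_map.
Proof.
split; last by exists (wand_supp f); apply: transpose_map_support.
by move=> m n a; rewrite /transpose_map h_equiv (transpose_equiv nY); apply: (k_equiv m).
Qed.

Lemma perp_wandE (a : X') : perp permf (wand (U X) (U Y)) (U X') f a <->
  apart (wand_supp f) (lsupp nX' a).
Proof. exact/perp_apart/(wand_least_supportE nX nY)/wand_supp_least. Qed.

Definition transpose_map_exp : expSb X' Y' := exist _ transpose_map transpose_map_exp_pred.

Lemma wand_map_exists : wand_map_rel h k f (exp_to_wand nX' nY' dX' transpose_map_exp).
Proof.
move=> a /perp_wandE /allP fa /=; rewrite /untranspose ifT; last first.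
  apply/allP => z /((exp_supp_least transpose_map_exp).2 _ transpose_map_support).
  exact: fa.
have ha : apart (wand_supp f) (lsupp nX (h a)).
  apply/allP => z /fa; apply: contra => /=.
  exact: lsupp_sub (equivariant_support (lsupp_least nX' a).1) z.
by rewrite (transpose_id nY dX (wand_defined_apart nX f) ha).
Qed.
Lemma wand_map_transpose (g : wand (U X') (U Y')) :
  wand_map_rel h k f g -> transpose dX' (wand_defined_apart nX' g) = transpose_map.
Proof.
move=> Hg; apply: functional_extensionality => n; apply: functional_extensionality => a.
have := atom_of_support nX' dX' a; move: (atom_of nX' a) => b Hb.
have := fresh_notin (wand_supp g ++ wand_supp f); move: (fresh _) => d.
rewrite mem_cat negb_or => /andP[dg df].
apply: Some_inj; rewrite -(transposeE nY' dX' _ n Hb dg) /transpose_map.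
rewrite -[Some (k _)]/(omap k (Some _)).
rewrite -(transposeE nY dX _ n (equivariant_support Hb) df) /fresh_eval.
rewrite Hg ?h_equiv; last exact/perp_wandE/(apart_swap nX' Hb).
by case: (proj1_sig f _) => //= y; rewrite k_equiv.
Qed.
End Naturality.

Theorem mainTheorem4 :
  exists phi : forall (X Y : mset Sb), is_nominal sbf X -> is_nominal sbf Y ->
                 dim_le sbf X 1 -> wand (U X) (U Y) -> U (expSb X Y),
    (* each phi_{X,Y} is an isomorphism of Perm-sets *)
    (forall (X Y : mset Sb) (nX : is_nominal sbf X) (nY : is_nominal sbf Y)
            (dX : dim_le sbf X 1),
        bijective (phi X Y nX nY dX) /\
        forall (g : Perm) (f : wand (U X) (U Y)),
          phi X Y nX nY dX (mact g f) = mact g (phi X Y nX nY dX f)) /\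
    (* naturality in X and Y *)
    (forall (X X' Y Y' : mset Sb)
            (nX : is_nominal sbf X) (nX' : is_nominal sbf X')
            (nY : is_nominal sbf Y) (nY' : is_nominal sbf Y')
            (dX : dim_le sbf X 1) (dX' : dim_le sbf X' 1)
            (h : X' -> X) (k : Y -> Y'),
        equivariant h -> equivariant k ->
        forall f : wand (U X) (U Y),
          (exists g : wand (U X') (U Y'), wand_map_rel h k f g) /\
          forall g : wand (U X') (U Y'), wand_map_rel h k f g ->
            proj1_sig (phi X' Y' nX' nY' dX' g : {F : Sb -> X' -> Y' | exp_pred F}) =
            (fun (n : Sb) (a' : X') =>
               k (proj1_sig (phi X Y nX nY dX f : {F : Sb -> X -> Y | exp_pred F}) n (h a')))).
Proof.
exists wand_to_exp; split=> [X Y nX nY dX|X X' Y Y' nX nX' nY nY' dX dX' h k eh ek f].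
  split; last exact: wand_to_exp_equiv.
  by exists (exp_to_wand nX nY dX); [apply: wand_to_expK | apply: exp_to_wandK].
split; first by eexists; apply: (wand_map_exists nX nX' nY nY' dX dX' eh ek).
exact: (wand_map_transpose nX nX' nY nY' dX dX' eh ek).
Qed.
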